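(* Let $\mathcal{Q}=\mathcal{Q}_\ell(T,X,Y)$ and let $\sigma^{\mathcal{Q}}$ be the least monoid congruence on $\mathcal{Q}$ containing $Y\times Y$. If $\alpha=h_1h_2\cdots h_n\in\mathcal{Q}$ is in $H^{\mathcal{P}}$-canonical form, where $h_i=s_ie_i\in H^{\mathcal{Q}}$ ($s_i\in T$, $e_i\in Y$) for $1\le i\le n$, then there exists $e\in Y$ with $s_1s_2\cdots s_n\cdot e\in Y$ and $\alpha\,\sigma^{\mathcal{Q}}\,s_1s_2\cdots s_ne$.
   Context: Let $T$ be a monoid, $X$ a semilattice with identity $1_X$ (ordered by $e\le f$ iff $ef=e$) with an order-preserving left action of $T$. $\mathcal{P}_\ell(T,X)$: let $T*X$ be the semigroup free product acting on $X$ (elements of $X$ act by multiplication), $\omega^+=\omega\cdot1_X$, $\sim$ the semigroup congruence generated by $\{(\alpha^+\alpha,\alpha)\}\cup\{(1_T,1_X)\}$, and $\mathcal{P}_\ell(T,X)=(T*X)/\sim$ with $[\alpha]^+=[\alpha^+]$; $X$, $T$ are identified with their injective images. It is a left Ehresmann monoid with projections $X$, unique $T$-normal forms $t_0e_1t_1\cdots e_nt_n$ ($n\ge0$, $e_i\in X\setminus\{1\}$, $t_1,\dots,t_{n-1}\in T\setminus\{1\}$, $e_i<(t_ie_{i+1}\cdots e_nt_n)^+$), and unary operation $a^*=e_n$ if $n\ge1$, $t_n=1$, and $a^*=1$ otherwise. $H^{\mathcal{P}}=\{te:t\in T,e\in X\}$; an $H^{\mathcal{P}}$-canonical form is an expression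 $h_1\cdots h_n$, $h_i\in H^{\mathcal{P}}$, with $h_i^*<h_{i+1}^+$ ($1\le i<n$) and $h_i\notin X$ ($2\le i\le n$). Let $Y$ be a subsemilattice of $X$ having an identity, satisfying (A): for all $t\in T$, $e,f\in Y$ with $e\le f$, $t\cdot f\in Y$ implies $t\cdot e\in Y$; (B): for all $t\in T$ there is $g\in Y$ with $t\cdot g\in Y$. $H^{\mathcal{Q}}=\{te:t\in T,e\in Y,t\cdot e\in Y\}$, and $\mathcal{Q}_\ell(T,X,Y)$ is the subsemigroup of $\mathcal{P}_\ell(T,X)$ generated by $H^{\mathcal{Q}}$; it is a monoid with identity the identity of $Y$. *)

From Stdlib Require Import List.
Import ListNotations.
Set Implicit Arguments.

Record Monoid := {
  mcar :> Type;
  mmul : mcar -> mcar -> mcar;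
  mone : mcar;
  mmulA : forall a b c, mmul a (mmul b c) = mmul (mmul a b) c;
  mmul1l : forall a, mmul mone a = a;
  mmul1r : forall a, mmul a mone = a }.

Record Semilattice := {
  scar :> Type;
  smul : scar -> scar -> scar;
  sone : scar;
  smulA : forall a b c, smul a (smul b c) = smul (smul a b) c;
  smulC : forall a b, smul a b = smul b a;
  smulI : forall a, smul a a = a;
  smul1l : forall a, smul sone a = a }.

Arguments smul {s}.
Arguments sone s : clear implicits.
Arguments mmul {m}.
Arguments mone m : clear implicits.

Definition sle {X : Semilattice} (e f : X) : Prop := smul e f = e.
Definition slt {X : Semilattice} (e f : X) : Prop := sle e f /\ e <> f.

Record LAction (T : Monoid) (X : Semilattice) := {
  act : T -> X -> X;
  act_mul : forall s t x, act (mmul s t) x = act s (act t x);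
  act_one : forall x, act (mone T) x = x;
  act_mono : forall t e f, sle e f -> sle (act t e) (act t f) }.

Section PQ.
Context {T : Monoid} {X : Semilattice} (A : LAction T X).

(** Words in the free semigroup on the disjoint union of T and X
    (nonempty words represent elements of T * X). *)
Inductive letter := LT (t : T) | LX (e : X).
Definition word := list letter.

Fixpoint actW (w : word) (x : X) : X :=
  match w with
  | [] => x
  | LT t :: w' => act A t (actW w' x)
  | LX e :: w' => smul e (actW w' x)
  end.

Definition plusW (w : word) : X := actW w (sone X).

(** The congruence on the free semigroup whose quotient is P_l(T,X):
    free product relations (T*X as a quotient of the free semigroup on T+X)
    together with (alpha^+ alpha, alpha) and (1_T, 1_X). *)
Inductive psim : word -> word -> Prop :=
| ps_refl w : psim w w
| ps_sym u v : psim u v -> psim v u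
| ps_trans u v w : psim u v -> psim v w -> psim u w
| ps_cat u u' v v' : psim u u' -> psim v v' -> psim (u ++ v) (u' ++ v')
| ps_TT s t : psim [LT s; LT t] [LT (mmul s t)]
| ps_XX e f : psim [LX e; LX f] [LX (smul e f)]
| ps_plus w : w <> [] -> psim (LX (plusW w) :: w) w
| ps_one : psim [LT (mone T)] [LX (sone X)].

(** T-normal forms t0 e1 t1 ... en tn, encoded as t0 and [(e1,t1);...;(en,tn)]. *)
Definition nfTail (l : list (X * T)) : word :=
  flat_map (fun p => [LX (fst p); LT (snd p)]) l.
Definition nfWord (t0 : T) (l : list (X * T)) : word := LT t0 :: nfTail l.

Fixpoint nf_ok (l : list (X * T)) : Prop :=
  match l with
  | [] => True
  | (e, t) :: rest =>
      e <> sone X /\ (rest <> [] -> t <> mone T) /\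
      slt e (plusW (LT t :: nfTail rest)) /\ nf_ok rest
  end.

(** a^* = e_n if n >= 1 and t_n = 1, and a^* = 1 otherwise. *)
Definition star_of (l : list (X * T)) (f : X) : Prop :=
  (exists l' e, l = l' ++ [(e, mone T)] /\ f = e) \/
  (~ (exists l' e, l = l' ++ [(e, mone T)]) /\ f = sone X).

(** [starP w f]: f = [w]^*, computed from a T-normal form of [w]. *)
Definition starP (w : word) (f : X) : Prop :=
  exists t0 l, nf_ok l /\ psim (nfWord t0 l) w /\ star_of l f.

(** The word t e representing an element of H^P. *)
Definition hw (p : T * X) : word := [LT (fst p); LX (snd p)].

Section QY.
Variable Y : X -> Prop.

Definition inHQ (p : T * X) : Prop := Y (snd p) /\ Y (act A (fst p) (snd p)).

(** Q_l(T,X,Y): subsemigroup of P generated by H^Q. *)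
Definition inQ (w : word) : Prop :=
  exists hs, hs <> [] /\ Forall inHQ hs /\ psim (flat_map hw hs) w.

Inductive sigQ : word -> word -> Prop :=
| sq_Y e f : Y e -> Y f -> sigQ [LX e] [LX f]
| sq_eq u v : inQ u -> psim u v -> sigQ u v
| sq_sym u v : sigQ u v -> sigQ v u
| sq_trans u v w : sigQ u v -> sigQ v w -> sigQ u w
| sq_mull w u v : inQ w -> sigQ u v -> sigQ (w ++ u) (w ++ v)
| sq_mulr w u v : inQ w -> sigQ u v -> sigQ (u ++ w) (v ++ w).
End QY.

Definition canonicalHP (hs : list (T * X)) : Prop :=
  hs <> [] /\
  (forall i d, S i < length hs ->
     exists f, starP (hw (nth i hs d)) f /\
               slt f (plusW (hw (nth (S i) hs d)))) /\
  (forall i d, 1 <= i < length hs ->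
     ~ exists x, psim (hw (nth i hs d)) [LX x]).

Definition prodT (hs : list (T * X)) : T :=
  fold_right (fun p acc => mmul (fst p) acc) (mone T) hs.

End PQ.

From Stdlib Require Import List.
Import ListNotations.
Set Implicit Arguments.

(* Within sigma^Q the projection of a generator s e of Q is irrelevant:
   s e = s e e sigma s e m = s (e m) for every m in Y, so s e and s g are
   sigma-related whenever both lie in H^Q.  Inductively h_2 ... h_n is
   sigma-related to s' e' with s' = s_2 ... s_n; conditions (B) and (A)
   shrink e' to some g <= e' for which s_1 (s' . g) is again in H^Q, and then
   h_1 s' g sigma s_1 (s' . g) s' g = s_1 s' g, because (s' . g) is the
   projection (s' g)^+. *)

Section SigmaQ.
Variables (T : Monoid) (X : Semilattice) (A : LAction T X) (Y : X -> Prop).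
Hypothesis Y_mul : forall e f, Y e -> Y f -> Y (smul e f).
Hypothesis condA : forall (t : T) (e f : X), Y e -> Y f -> sle e f ->
  Y (act A t f) -> Y (act A t e).
Hypothesis condB : forall t : T, exists g, Y g /\ Y (act A t g).

Lemma sle_smull (e f : X) : sle (smul e f) e.
Proof. unfold sle. rewrite smulC, smulA, smulI. reflexivity. Qed.

Lemma sle_smulr (e f : X) : sle (smul e f) f.
Proof. unfold sle. rewrite <- smulA, smulI. reflexivity. Qed.

Lemma plusW_hw (p : T * X) : plusW A (hw p) = act A (fst p) (snd p).
Proof. unfold plusW; simpl. rewrite smulC, smul1l. reflexivity. Qed.

Lemma inQ_hw p : inHQ A Y p -> inQ A Y (hw p).
Proof.
  intros Hp. exists [p]. repeat split; auto.
  - discriminate.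
  - simpl. rewrite ?app_nil_r. apply ps_refl.
Qed.

Lemma inQ_hw2 p q : inHQ A Y p -> inHQ A Y q -> inQ A Y (hw p ++ hw q).
Proof.
  intros Hp Hq. exists [p; q]. repeat split; auto.
  - discriminate.
  - simpl. rewrite ?app_nil_r. apply ps_refl.
Qed.

Lemma inHQ_smul s e m : inHQ A Y (s, e) -> Y m -> inHQ A Y (s, smul e m).
Proof.
  intros [Ye Yse] Ym; simpl in *. split; simpl.
  - auto.
  - apply condA with (f := e); auto using sle_smull.
Qed.

Lemma sigQ_hw_smul s e m : inHQ A Y (s, e) -> Y m ->
  sigQ A Y (hw (s, e)) (hw (s, smul e m)).
Proof.
  intros He Ym. pose proof He as [Ye _]; simpl in Ye.
  assert (Hsee : psim A (hw (s, e)) ([LT s; LX e] ++ [LX e])).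
  { apply (ps_cat (ps_refl A [LT s])). rewrite <- (smulI _ e) at 1.
    apply ps_sym, ps_XX. }
  apply sq_trans with ([LT s; LX e] ++ [LX e]).
  { apply sq_eq; auto using inQ_hw. }
  apply sq_trans with ([LT s; LX e] ++ [LX m]).
  { apply sq_mull; [apply (inQ_hw He) | apply sq_Y; auto]. }
  apply sq_sym, sq_eq; [apply inQ_hw, inHQ_smul; auto |].
  apply (ps_cat (ps_refl A [LT s])), ps_sym, ps_XX.
Qed.

Lemma sigQ_hw s e g : inHQ A Y (s, e) -> inHQ A Y (s, g) ->
  sigQ A Y (hw (s, e)) (hw (s, g)).
Proof.
  intros He Hg. apply sq_trans with (hw (s, smul e g)).
  - apply sigQ_hw_smul; auto. apply Hg.
  - apply sq_sym. rewrite smulC. apply sigQ_hw_smul; auto. apply He.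
Qed.

Lemma psim_hw_act s t g :
  psim A (hw (s, act A t g) ++ hw (t, g)) (hw (mmul s t, g)).
Proof.
  apply ps_trans with ([LT s; LT t] ++ [LX g]).
  - apply (ps_cat (ps_refl A [LT s])).
    pose proof (ps_plus A (w := hw (t, g)) ltac:(discriminate)) as Hplus.
    rewrite plusW_hw in Hplus. exact Hplus.
  - apply (ps_cat (ps_TT A s t) (ps_refl A [LX g])).
Qed.

Lemma exists_inHQ_compose s t e : inHQ A Y (t, e) ->
  exists g, Y g /\ Y (act A t g) /\ Y (act A s (act A t g)).
Proof.
  intros [Ye Yte]; simpl in *.
  destruct (condB (mmul s t)) as [g0 [Yg0 Ystg0]].
  rewrite act_mul in Ystg0.
  exists (smul e g0). repeat split; auto.
  - apply condA with (f := e); auto using sle_smull.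
  - rewrite <- act_mul in *.
    apply condA with (f := g0); auto using sle_smulr.
Qed.

Lemma sigQ_prodT hs : hs <> [] -> Forall (inHQ A Y) hs ->
  exists e, Y e /\ Y (act A (prodT hs) e) /\
    sigQ A Y (flat_map hw hs) (hw (prodT hs, e)).
Proof.
  induction hs as [|[s1 e1] rest IH]; intros Hne HF; [congruence |].
  inversion HF as [|? ? Hh Hrest]; subst.
  destruct rest as [|h2 rest'].
  { exists e1. change (prodT [(s1, e1)]) with (mmul s1 (mone T)).
    change (flat_map hw [(s1, e1)]) with (hw (s1, e1) ++ []).
    rewrite mmul1r, app_nil_r. destruct Hh as [Ye1 Yse1].
    repeat split; auto. apply sq_eq; [apply inQ_hw; split; auto | apply ps_refl]. }
  destruct (IH ltac:(discriminate) Hrest) as [e' [Ye' [Yse' Hsig]]].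
  set (s' := prodT (h2 :: rest')) in *.
  destruct (exists_inHQ_compose s1 (t := s') (conj Ye' Yse'))
    as [g [Yg [Ys'g Ys1s'g]]].
  assert (Hs1 : inHQ A Y (s1, act A s' g)) by (split; auto).
  exists g. change (prodT ((s1, e1) :: h2 :: rest')) with (mmul s1 s').
  split; [auto | split; [rewrite act_mul; auto |]].
  change (flat_map hw ((s1, e1) :: h2 :: rest'))
    with (hw (s1, e1) ++ flat_map hw (h2 :: rest')).
  apply sq_trans with (hw (s1, e1) ++ hw (s', e')).
  { apply sq_mull; auto using inQ_hw. }
  apply sq_trans with (hw (s1, e1) ++ hw (s', g)).
  { apply sq_mull; auto using inQ_hw. apply sigQ_hw; split; auto. }
  apply sq_trans with (hw (s1, act A s' g) ++ hw (s', g)).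
  { apply sq_mulr; auto using sigQ_hw. apply inQ_hw; split; auto. }
  apply sq_eq; [apply inQ_hw2; auto; split; auto |].
  apply psim_hw_act.
Qed.

End SigmaQ.

Theorem mainTheorem16 (T : Monoid) (X : Semilattice) (A : LAction T X)
  (Y : X -> Prop)
  (Y_mul : forall e f, Y e -> Y f -> Y (smul e f))
  (Y_id : exists oneY, Y oneY /\ forall f, Y f -> smul oneY f = f)
  (condA : forall (t : T) (e f : X), Y e -> Y f -> sle e f ->
             Y (act A t f) -> Y (act A t e))
  (condB : forall t : T, exists g, Y g /\ Y (act A t g))
  (hs : list (T * X))
  (hsQ : Forall (inHQ A Y) hs)
  (hscan : canonicalHP A hs) :
  exists e : X, Y e /\ Y (act A (prodT hs) e) /\
    sigQ A Y (flat_map hw hs) [LT (prodT hs); LX e].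
Proof.
  destruct hscan as [hs_nonempty _].
  exact (sigQ_prodT Y_mul condA condB hs_nonempty hsQ).
Qed.
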